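(* In generalized non-signalling theory (box world), let $X$ and $Y$ be systems (each consisting of one or more boxes), let $M_X$ be a maximally informative measurement on $X$ and $M_Y$ a maximally informative measurement on $Y$. Then the product measurement $M_X\otimes M_Y$ is a maximally informative measurement on the composite system $XY$.
   Context: Box world (GNST): a box has a finite set of inputs and outputs. A system of $n$ boxes has states given by all collections $p(\mathbf{a}|\mathbf{x})\ge0$ (output tuple $\mathbf{a}$, input tuple $\mathbf{x}$) that are normalized ($\sum_{\mathbf{a}}p(\mathbf{a}|\mathbf{x})=1$ for all $\mathbf{x}$) and no-signalling (for each $i$, $\sum_{a_i}p(\mathbf{a}|\mathbf{x})$ is independent of $x_i$). An effect is any linear map $\mu$ from states to $[0,1]$; a vector $\mathbf{R}$ indexed by $(\mathbf{a},\mathbf{x})$ represents $\mu$ if $\mu(\mathbf{p})=\sum p(\mathbf{a}|\mathbf{x})R(\mathbf{a}|\mathbf{x})$ for all states. A measurement is a finite set $\{(r,\mu_r)\}$ of effects summing to the constant map $1$. If $M_X$ has effects $\mu_r$ represented by $\mathbf{R}_r$ and $M_Y$ has effects $\nu_s$ represented by $\mathbf{S}_s$, then $M_X\otimes M_Y$ is the measurement on $XY$ with outcomes $(r,s)$ and effects represented by the tensor products $\mathbf{R}_r\otimes\mathbf{S}_s$ (performing $M_X$ on $X$ and $M_Y$ on $Y$ independently). A measurement $N=\{(s,\nu_s)\}$ refines $M=\{(r,\mu_r)\}$ if the outcomes of $N$ can be partitioned into sets $P_r$ with $\mu_r=\sum_{s\in P_r}\nu_s$; the refinement is trivial if $\nu_s\propto\mu_r$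 whenever $s\in P_r$. A measurement is maximally informative if it has no non-trivial refinement. *)

From HB Require Import structures.
From mathcomp Require Import all_boot all_order all_algebra.
From mathcomp Require Import reals.
Set Implicit Arguments. Unset Strict Implicit. Unset Printing Implicit Defensive.
Import Order.TTheory GRing.Theory Num.Theory.
Local Open Scope ring_scope.

Record system := Sys {
  sBox : finType;
  sIn  : sBox -> finType;
  sOut : sBox -> finType }.

Definition valid_system (S : system) : Prop :=
  (0 < #|sBox S|)%N /\
  (forall b, 0 < #|@sIn S b|)%N /\ (forall b, 0 < #|@sOut S b|)%N.

Definition inT (S : system) := {dffun forall b : sBox S, @sIn S b}.
Definition outT (S : system) := {dffun forall b : sBox S, @sOut S b}.

(* index (a, x) of the vectors p(a|x), R(a|x) *)
Definition idx (S : system) := (outT S * inT S)%type.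

Definition vec (R : realType) (S : system) := idx S -> R.

Definition is_state (R : realType) (S : system) (p : vec R S) : Prop :=
  (forall ax, 0 <= p ax) /\
  (forall x : inT S, \sum_(a : outT S) p (a, x) = 1) /\
  (forall (i : sBox S) (x x' : inT S) (a : outT S),
     (forall j, j != i -> x j = x' j) ->
     \sum_(a' : outT S | [forall j, (j != i) ==> (a' j == a j)]) p (a', x)
     = \sum_(a' : outT S | [forall j, (j != i) ==> (a' j == a j)]) p (a', x')).

Definition pair (R : realType) (S : system) (p E : vec R S) : R :=
  \sum_(ax : idx S) p ax * E ax.

Definition is_effect (R : realType) (S : system) (E : vec R S) : Prop :=
  forall p, is_state p -> 0 <= pair p E <= 1.

Definition is_measurement (R : realType) (S : system) (T : finType)
    (E : T -> vec R S) : Prop :=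
  (forall r, is_effect (E r)) /\
  (forall p, is_state p -> \sum_(r : T) pair p (E r) = 1).

(* N (outcomes s : Ts) refines M (outcomes r : Tr): a partition of the
   outcomes of N into blocks P_r = f^-1(r) with mu_r = sum_{s in P_r} nu_s,
   equality of effects being equality as maps on states *)
Definition refines (R : realType) (S : system) (Tr Ts : finType)
    (M : Tr -> vec R S) (N : Ts -> vec R S) (f : Ts -> Tr) : Prop :=
  forall r p, is_state p ->
    pair p (M r) = \sum_(s : Ts | f s == r) pair p (N s).

Definition trivial_refinement (R : realType) (S : system) (Tr Ts : finType)
    (M : Tr -> vec R S) (N : Ts -> vec R S) (f : Ts -> Tr) : Prop :=
  forall s, exists c : R, forall p, is_state p ->
    pair p (N s) = c * pair p (M (f s)).

Definition maximally_informative (R : realType) (S : system) (Tr : finType)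
    (M : Tr -> vec R S) : Prop :=
  is_measurement M /\
  forall (Ts : finType) (N : Ts -> vec R S) (f : Ts -> Tr),
    is_measurement N -> refines M N f -> trivial_refinement M N f.

Definition compose (X Y : system) : system :=
  @Sys (sBox X + sBox Y)%type
    (fun b => match b with inl b => @sIn X b | inr b => @sIn Y b end)
    (fun b => match b with inl b => @sOut X b | inr b => @sOut Y b end).

Definition resXo (X Y : system) (a : outT (compose X Y)) : outT X :=
  [ffun b => a (inl b)].
Definition resYo (X Y : system) (a : outT (compose X Y)) : outT Y :=
  [ffun b => a (inr b)].
Definition resXi (X Y : system) (x : inT (compose X Y)) : inT X :=
  [ffun b => x (inl b)].
Definition resYi (X Y : system) (x : inT (compose X Y)) : inT Y :=
  [ffun b => x (inr b)].

Definition tensor (R : realType) (X Y : system) (EX : vec R X) (EY : vec R Y)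
  : vec R (compose X Y) :=
  fun ax => EX (resXo ax.1, resXi ax.2) * EY (resYo ax.1, resYi ax.2).

Definition prod_meas (R : realType) (X Y : system) (Tr Ts : finType)
    (MX : Tr -> vec R X) (MY : Ts -> vec R Y) : (Tr * Ts)%type -> vec R (compose X Y) :=
  fun rs => tensor (MX rs.1) (MY rs.2).

(* Box world is locally tomographic: effects on XY that agree on all product states
   u (x) v agree on every state.  Indeed each Y-slice of a state of XY is a no-signalling
   vector, hence a combination of finitely many fixed states of Y whose coefficients are
   linear in the slice and so are no-signalling vectors of X; and every no-signalling
   vector is a combination of two states.
   If N refines M_X (x) M_Y, preparing a state q of Y turns N into a refinement of M_X,
   so maximality of M_X gives N_s(u (x) q) = c(q) M_X(u); symmetrically
   N_s(u (x) v) = d(u) M_Y(v).  Together these force N_s(u (x) v) = k M_X(u) M_Y(v),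
   and local tomography extends the identity to every state of XY.
   That M_X (x) M_Y is a measurement at all uses the same slices: pairing a state of XY
   with an effect E of X leaves a subnormalised no-signalling vector of Y, on which an
   effect F of Y still takes values in [0, 1]. *)

From HB Require Import structures.
From mathcomp Require Import all_boot all_order all_algebra.
From mathcomp Require Import reals boolp.
From mathcomp Require Import lra ring zify.
Set Implicit Arguments. Unset Strict Implicit. Unset Printing Implicit Defensive.
Import Order.TTheory GRing.Theory Num.Theory.
Local Open Scope ring_scope.

Lemma pairBr (R : realType) (S : system) (p E F : vec R S) :
  pair p (fun ax => E ax - F ax) = pair p E - pair p F.
Proof. by rewrite /pair -sumrB; apply: eq_bigr => ax _; rewrite mulrBr. Qed.

Lemma pairZr (R : realType) (S : system) (p E : vec R S) c :
  pair p (fun ax => c * E ax) = c * pair p E.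
Proof. by rewrite /pair mulr_sumr; apply: eq_bigr => ax _; rewrite mulrCA. Qed.

Lemma pair_sumr (R : realType) (S : system) (T : finType) (p : vec R S) (E : T -> vec R S) :
  pair p (fun ax => \sum_t E t ax) = \sum_t pair p (E t).
Proof. by rewrite /pair exchange_big; apply: eq_bigr => ax _; rewrite mulr_sumr. Qed.

Lemma dffun_inhabited (aT : finType) (rT : aT -> finType) :
  (forall a, 0 < #|rT a|)%N -> inhabited {dffun forall a, rT a}.
Proof.
move=> rT_gt0; have ex a : exists x : rT a, true.
  by have /card_gt0P[x _] := rT_gt0 a; exists x.
by constructor; exact: [ffun a => xchoose (ex a)].
Qed.

Lemma inT_inhabited (S : system) : valid_system S -> inhabited (inT S).
Proof. by case=> _ [+ _]; exact: dffun_inhabited. Qed.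

Lemma outT_inhabited (S : system) : valid_system S -> inhabited (outT S).
Proof. by case=> _ [_]; exact: dffun_inhabited. Qed.

Section NoSignalling.
Variables (R : realType) (S : system).
Implicit Types (w : vec R S) (i : sBox S) (x : inT S) (a : outT S).

Definition agree_off i a a' : bool := [forall j, (j != i) ==> (a' j == a j)].

Definition nosig_at w i := forall x x' a, (forall j, j != i -> x j = x' j) ->
  \sum_(a' | agree_off i a a') w (a', x) = \sum_(a' | agree_off i a a') w (a', x').

Definition nosig w := forall i, nosig_at w i.

Lemma nosig_affine w c d : nosig w -> nosig (fun ax => c * w ax + d).
Proof. by move=> ns i x x' a xx'; rewrite !big_split -!mulr_sumr (ns i x x' a xx'). Qed.

Lemma nosig_lincomb (I : finType) (c : I -> R) (u : I -> vec R S) :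
  (forall k, nosig (u k)) -> nosig (fun ax => \sum_k c k * u k ax).
Proof.
move=> ns i x x' a xx'; rewrite exchange_big [RHS]exchange_big.
by apply: eq_bigr => k _; rewrite -!mulr_sumr (ns k i x x' a xx').
Qed.

Lemma sum_nosig_at w i x x' : nosig_at w i -> (forall j, j != i -> x j = x' j) ->
  \sum_a w (a, x) = \sum_a w (a, x').
Proof.
move=> ns xx'; case: (pickP (@predT (outT S))) => [a0 _|noa]; last first.
  by rewrite !big_pred0.
pose g a : outT S := [ffun j => if j == i then a0 j else a j].
have blocks y : \sum_a w (a, y) =
    \sum_(a'' : outT S | a'' i == a0 i) \sum_(a | agree_off i a'' a) w (a, y).
  rewrite (partition_big g (fun a'' : outT S => a'' i == a0 i)) => [|a _]; last first.
    by rewrite ffunE eqxx.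
  apply: eq_bigr => a'' /eqP a''i; apply: eq_bigl => a /=.
  apply/eqP/forallP => [<- j|agr]; first by apply/implyP => /negbTE ne; rewrite ffunE ne.
  apply/ffunP => j; rewrite ffunE; case: eqVneq => [->|ne]; first by rewrite a''i.
  exact/eqP/(implyP (agr j) ne).
by rewrite !blocks; apply: eq_bigr => a'' _; exact: ns.
Qed.

Lemma sum_nosig w x x' : nosig w -> \sum_a w (a, x) = \sum_a w (a, x').
Proof.
move=> ns; have [n] := ubnP #|[pred j | x j != x' j]|; elim: n x => // n IH x.
rewrite ltnS => le_n; case: (pickP [pred j | x j != x' j]) => [i /= xi|eq_x]; last first.
  suff -> : x = x' by [].
  by apply/ffunP => j; exact/eqP/negbFE/eq_x.
pose x1 : inT S := [ffun j => if j == i then x' j else x j].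
rewrite (@sum_nosig_at w i x x1 (ns i)) => [|j /negbTE ne]; last by rewrite ffunE ne.
apply: IH; apply: leq_trans le_n; rewrite [X in (_ < X)%N](cardD1 i) inE xi.
apply: subset_leq_card; apply/subsetP => j; rewrite !inE ffunE.
by case: (eqVneq j i) => [->|]; rewrite ?eqxx.
Qed.

Lemma pair_effect_bounds w F x : (forall ax, 0 <= w ax) -> nosig w -> is_effect F ->
  0 <= pair w F <= \sum_a w (a, x).
Proof.
move=> w_ge0 ns eF; set lam := \sum_a w (a, x).
have norm_w x' : \sum_a w (a, x') = lam by exact: sum_nosig.
have [lam0|lam_neq0] := eqVneq lam 0.
  have w0 ax : w ax = 0.
    case: ax => a x'; apply: (psumr_eq0P (P := xpredT) (F := fun a => w (a, x'))) => //.
    by rewrite norm_w.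
  by rewrite lam0 /pair big1 ?lexx // => ax _; rewrite w0 mul0r.
have lam_gt0 : 0 < lam by rewrite lt0r lam_neq0 sumr_ge0.
have st : is_state (fun ax => lam^-1 * w ax).
  split; first by move=> ax; rewrite mulr_ge0 // invr_ge0 ltW.
  split; first by move=> x'; rewrite -mulr_sumr norm_w mulVf.
  by move=> i x1 x2 a h; rewrite -!mulr_sumr (ns i x1 x2 a h).
have -> : pair w F = lam * pair (fun ax => lam^-1 * w ax) F.
  by rewrite /pair mulr_sumr; apply: eq_bigr => ax _; rewrite !mulrA mulfV ?mul1r.
have /andP[pF_ge0 pF_le1] := eF _ st.
by rewrite mulr_ge0 ?(ltW lam_gt0) //= -[X in _ <= X]mulr1 ler_wpM2l // ltW.
Qed.

End NoSignalling.

Section States.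
Variables (R : realType) (S : system).
Hypothesis VS : valid_system S.
Implicit Types (w : vec R S).

Let card_outT_neq0 : #|{: outT S}|%:R != 0 :> R.
Proof. by have [a0] := outT_inhabited VS; rewrite pnatr_eq0 -lt0n; apply/card_gt0P; exists a0. Qed.

Definition uniform : vec R S := fun=> #|{: outT S}|%:R^-1.

Lemma uniform_state : is_state uniform.
Proof.
split; first by move=> ax; rewrite invr_ge0 ler0n.
by split=> // x; rewrite sumr_const -(mulr_natl _ #|xpredT|) mulfV.
Qed.

Lemma nosig_span_states w : nosig w ->
  exists c1 c2 (s1 s2 : vec R S), [/\ is_state s1, is_state s2 &
    forall ax, w ax = c1 * s1 ax + c2 * s2 ax].
Proof.
move=> ns; have [x0] := inT_inhabited VS; have [a0] := outT_inhabited VS.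
set K := 1 + \sum_ax `|w ax|.
have wK ax : 0 < w ax + K.
  have : `|w ax| <= \sum_ax' `|w ax'| by rewrite (bigD1 ax) //= lerDl sumr_ge0.
  have := ler_norm (- w ax); rewrite normrN /K; lra.
set D := \sum_a (w (a, x0) + K).
have D_gt0 : 0 < D.
  rewrite /D (bigD1 a0) //=; have := wK (a0, x0).
  have : 0 <= \sum_(a | a != a0) (w (a, x0) + K) by apply: sumr_ge0 => a _; exact/ltW.
  lra.
(* [w + K] is positive, hence [D] times a state, and [K] is [K * #|outT S|] times [uniform]. *)
exists D, (- (K * #|{: outT S}|%:R)), (fun ax => D^-1 * w ax + D^-1 * K), uniform; split.
- split=> [ax|]; first by rewrite -mulrDr mulr_ge0 ?invr_ge0 // ltW.
  split; last exact: nosig_affine.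
  move=> x; under eq_bigr do rewrite -mulrDr.
  by rewrite -mulr_sumr big_split /= (sum_nosig x x0 ns) -big_split mulVf ?lt0r_neq0.
- exact: uniform_state.
- move=> ax; rewrite /uniform; field.
  by rewrite card_outT_neq0 lt0r_neq0.
Qed.

End States.

Section Composite.
Variables (R : realType) (X Y : system).
Local Notation XY := (compose X Y).

Definition joino (aX : outT X) (aY : outT Y) : outT XY :=
  [ffun b => match b as b0 return @sOut XY b0 with inl b => aX b | inr b => aY b end].
Definition joini (xX : inT X) (xY : inT Y) : inT XY :=
  [ffun b => match b as b0 return @sIn XY b0 with inl b => xX b | inr b => xY b end].
Definition join_idx (pX : idx X) (pY : idx Y) : idx XY :=
  (joino pX.1 pY.1, joini pX.2 pY.2).

Lemma joinoK a : joino (resXo a) (resYo a) = a.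
Proof. by apply/ffunP => -[b|b]; rewrite !ffunE. Qed.
Lemma joiniK x : joini (resXi x) (resYi x) = x.
Proof. by apply/ffunP => -[b|b]; rewrite !ffunE. Qed.
Lemma resXo_join aX aY : resXo (joino aX aY) = aX.
Proof. by apply/ffunP => b; rewrite !ffunE. Qed.
Lemma resYo_join aX aY : resYo (joino aX aY) = aY.
Proof. by apply/ffunP => b; rewrite !ffunE. Qed.
Lemma resXi_join xX xY : resXi (joini xX xY) = xX.
Proof. by apply/ffunP => b; rewrite !ffunE. Qed.
Lemma resYi_join xX xY : resYi (joini xX xY) = xY.
Proof. by apply/ffunP => b; rewrite !ffunE. Qed.

Lemma big_outT_compose (F : outT XY -> R) :
  \sum_a F a = \sum_aX \sum_aY F (joino aX aY).
Proof.
rewrite pair_big (reindex (fun aXY : outT X * outT Y => joino aXY.1 aXY.2)) //=.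
by exists (fun a => (resXo a, resYo a)) => [[aX aY]|a] _; rewrite ?resXo_join ?resYo_join ?joinoK.
Qed.

Lemma big_idx_compose (F : idx XY -> R) :
  \sum_ax F ax = \sum_pX \sum_pY F (join_idx pX pY).
Proof.
rewrite pair_big (reindex (fun pXY : idx X * idx Y => join_idx pXY.1 pXY.2)) //=.
exists (fun ax : idx XY => ((resXo ax.1, resXi ax.2), (resYo ax.1, resYi ax.2))).
  by move=> [[aX xX] [aY xY]] _; rewrite /= resXo_join resYo_join resXi_join resYi_join.
by move=> [a x] _; rewrite /join_idx /= joinoK joiniK.
Qed.

Lemma tensorE (u : vec R X) (v : vec R Y) pX pY :
  tensor u v (join_idx pX pY) = u pX * v pY.
Proof.
by case: pX pY => [aX xX] [aY xY]; rewrite /tensor /= resXo_join resYo_join resXi_join resYi_join.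
Qed.

Lemma pair_tensor_sum (u : vec R X) (v : vec R Y) (G : vec R XY) :
  pair (tensor u v) G = \sum_pX \sum_pY u pX * v pY * G (join_idx pX pY).
Proof. by rewrite /pair big_idx_compose; under eq_bigr do under eq_bigr do rewrite tensorE. Qed.

Lemma pair_tensor (u E : vec R X) (v F : vec R Y) :
  pair (tensor u v) (tensor E F) = pair u E * pair v F.
Proof.
rewrite pair_tensor_sum /pair mulr_suml; apply: eq_bigr => pX _.
by rewrite mulr_sumr; apply: eq_bigr => pY _; rewrite tensorE; ring.
Qed.

Lemma pair_join_decomposition (I : finType) (p G : vec R XY)
    (U : I -> vec R X) (V : I -> vec R Y) :
  (forall pX pY, p (join_idx pX pY) = \sum_k U k pX * V k pY) ->
  pair p G = \sum_k pair (tensor (U k) (V k)) G.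
Proof.
move=> p_eq; rewrite [LHS]/pair big_idx_compose.
under eq_bigr do under eq_bigr do rewrite p_eq big_distrl.
under eq_bigr do rewrite exchange_big; rewrite exchange_big.
by apply: eq_bigr => k _; rewrite pair_tensor_sum.
Qed.

End Composite.

Section CompositeStates.
Variables (R : realType) (X Y : system).
Local Notation XY := (compose X Y).
Implicit Types (a : outT XY) (aX : outT X) (aY : outT Y).

Lemma agree_off_inl (i : sBox X) a aX aY :
  @agree_off XY (inl i) a (joino aX aY) = agree_off i (resXo a) aX && (aY == resYo a).
Proof.
apply/forallP/andP => [agr|[/forallP agrX /eqP->]].
  split; first by apply/forallP => k; have := agr (inl k); rewrite !ffunE.
  by apply/eqP/ffunP => k; have := agr (inr k); rewrite !ffunE => /eqP->.
by move=> [k|k]; rewrite !ffunE ?eqxx ?implybT //; have := agrX k; rewrite ffunE.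
Qed.

Lemma agree_off_inr (i : sBox Y) a aX aY :
  @agree_off XY (inr i) a (joino aX aY) = (aX == resXo a) && agree_off i (resYo a) aY.
Proof.
apply/forallP/andP => [agr|[/eqP-> /forallP agrY]].
  split; last by apply/forallP => k; have := agr (inr k); rewrite !ffunE.
  by apply/eqP/ffunP => k; have := agr (inl k); rewrite !ffunE => /eqP->.
by move=> [k|k]; rewrite !ffunE ?eqxx ?implybT //; have := agrY k; rewrite ffunE.
Qed.

Lemma big_agree_off_inl (F : outT XY -> R) (i : sBox X) a :
  \sum_(a' | @agree_off XY (inl i) a a') F a' =
  \sum_(aX | agree_off i (resXo a) aX) F (joino aX (resYo a)).
Proof.
rewrite big_mkcond big_outT_compose [RHS]big_mkcond; apply: eq_bigr => aX _.
under eq_bigr do rewrite agree_off_inl.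
case: agree_off; rewrite /=; last by rewrite big1.
by rewrite (bigD1 (resYo a)) //= eqxx big1 ?addr0 // => aY /negbTE ->.
Qed.

Lemma big_agree_off_inr (F : outT XY -> R) (i : sBox Y) a :
  \sum_(a' | @agree_off XY (inr i) a a') F a' =
  \sum_(aY | agree_off i (resYo a) aY) F (joino (resXo a) aY).
Proof.
rewrite big_mkcond big_outT_compose (bigD1 (resXo a)) //= [X in _ + X]big1 ?addr0.
  by rewrite [RHS]big_mkcond; apply: eq_bigr => aY _; rewrite agree_off_inr eqxx.
by move=> aX /negbTE neq; apply: big1 => aY _; rewrite agree_off_inr neq.
Qed.

Lemma joini_agree_off_inl (xX xX' : inT X) (xY : inT Y) (i : sBox X) :
  (forall k, k != i -> xX k = xX' k) ->
  forall j, j != inl i -> joini xX xY j = joini xX' xY j.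
Proof. by move=> agr [k|k] neq; rewrite !ffunE //; apply: agr. Qed.

Lemma joini_agree_off_inr (xX : inT X) (xY xY' : inT Y) (i : sBox Y) :
  (forall k, k != i -> xY k = xY' k) ->
  forall j, j != inr i -> joini xX xY j = joini xX xY' j.
Proof. by move=> agr [k|k] neq; rewrite !ffunE //; apply: agr. Qed.

Lemma resi_agree_off_inl (x x' : inT XY) (i : sBox X) : (forall j, j != inl i -> x j = x' j) ->
  (forall k, k != i -> resXi x k = resXi x' k) /\ resYi x = resYi x'.
Proof.
move=> agr; split; first by move=> k neq; rewrite !ffunE; exact: (agr (inl k)).
by apply/ffunP => k; rewrite !ffunE; exact: (agr (inr k)).
Qed.

Lemma resi_agree_off_inr (x x' : inT XY) (i : sBox Y) : (forall j, j != inr i -> x j = x' j) ->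
  resXi x = resXi x' /\ (forall k, k != i -> resYi x k = resYi x' k).
Proof.
move=> agr; split; last by move=> k neq; rewrite !ffunE; exact: (agr (inr k)).
by apply/ffunP => k; rewrite !ffunE; exact: (agr (inl k)).
Qed.

Lemma tensor_state (u : vec R X) (v : vec R Y) :
  is_state u -> is_state v -> is_state (tensor u v).
Proof.
move=> [u_ge0 [u1 uNS]] [v_ge0 [v1 vNS]].
split; first by move=> ax; rewrite mulr_ge0.
split=> [x|[i|i] x x' a agr]; rewrite /tensor.
- rewrite big_outT_compose -(u1 (resXi x)); apply: eq_bigr => aX _.
  by under eq_bigr do rewrite /= resXo_join resYo_join; rewrite -mulr_sumr v1 mulr1.
- have [agrX eqY] := resi_agree_off_inl agr; rewrite !big_agree_off_inl.
  under eq_bigr do rewrite resXo_join resYo_join.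
  under [RHS]eq_bigr do rewrite resXo_join resYo_join.
  by rewrite /= -!mulr_suml (uNS i _ _ _ agrX) eqY.
- have [eqX agrY] := resi_agree_off_inr agr; rewrite !big_agree_off_inr.
  under eq_bigr do rewrite resXo_join resYo_join.
  under [RHS]eq_bigr do rewrite resXo_join resYo_join.
  by rewrite /= -!mulr_sumr (vNS i _ _ _ agrY) eqX.
Qed.

Definition sliceX (p : vec R XY) (pY : idx Y) : vec R X := fun pX => p (join_idx pX pY).
Definition sliceY (p : vec R XY) (pX : idx X) : vec R Y := fun pY => p (join_idx pX pY).

Lemma nosig_sliceX (p : vec R XY) pY : nosig p -> nosig (sliceX p pY).
Proof.
move=> ns i x x' aX agr; rewrite /sliceX /join_idx /=.
have lift z : \sum_(aX' | agree_off i aX aX') p (joino aX' pY.1, joini z pY.2) =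
    \sum_(a' | @agree_off XY (inl i) (joino aX pY.1) a') p (a', joini z pY.2).
  by rewrite big_agree_off_inl resXo_join resYo_join.
by rewrite !lift; apply: ns; exact: joini_agree_off_inl.
Qed.

Lemma nosig_sliceY (p : vec R XY) pX : nosig p -> nosig (sliceY p pX).
Proof.
move=> ns i y y' aY agr; rewrite /sliceY /join_idx /=.
have lift z : \sum_(aY' | agree_off i aY aY') p (joino pX.1 aY', joini pX.2 z) =
    \sum_(a' | @agree_off XY (inr i) (joino pX.1 aY) a') p (a', joini pX.2 z).
  by rewrite big_agree_off_inr resXo_join resYo_join.
by rewrite !lift; apply: ns; exact: joini_agree_off_inr.
Qed.

Lemma tensor_effect (E : vec R X) (F : vec R Y) :
  valid_system X -> valid_system Y -> is_effect E -> is_effect F -> is_effect (tensor E F).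
Proof.
move=> VX VY eE eF p [p_ge0 [p1 pNS]].
have [x0] := inT_inhabited VX; have [y0] := inT_inhabited VY.
pose w pY := pair (sliceX p pY) E.
have -> : pair p (tensor E F) = pair w F.
  rewrite /pair big_idx_compose exchange_big; apply: eq_bigr => pY _.
  by rewrite mulr_suml; apply: eq_bigr => pX _; rewrite tensorE mulrA.
have w_bounds pY : 0 <= w pY <= \sum_aX sliceX p pY (aX, x0).
  exact: pair_effect_bounds (fun _ => p_ge0 _) (nosig_sliceX pY pNS) eE.
have w_nosig : nosig w.
  move=> i y y' b agr; rewrite /w /pair exchange_big [RHS]exchange_big.
  apply: eq_bigr => pX _; rewrite -!mulr_suml; congr (_ * _).
  exact: (nosig_sliceY pX pNS b agr).
have w_le1 : \sum_b w (b, y0) <= 1.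
  rewrite -(p1 (joini x0 y0)) big_outT_compose [leRHS]exchange_big; apply: ler_sum => b _.
  by have /andP[_] := w_bounds (b, y0).
have w_ge0 pY : 0 <= w pY by have /andP[] := w_bounds pY.
have /andP[wF_ge0 wF_le] := pair_effect_bounds y0 w_ge0 w_nosig eF.
by rewrite wF_ge0 (le_trans wF_le w_le1).
Qed.

End CompositeStates.

Lemma exists_spanning_rows (F : fieldType) n (P : 'rV[F]_n -> Prop) :
  exists m (M : 'M[F]_(m, n)), (forall k, P (row k M)) /\ (forall v, P v -> (v <= M)%MS).
Proof.
suff grow d m (M : 'M[F]_(m, n)) : (n - \rank M <= d)%N -> (forall k, P (row k M)) ->
    exists m' (M' : 'M[F]_(m', n)), (forall k, P (row k M')) /\ (forall v, P v -> (v <= M')%MS).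
  by apply: (grow n 0 0); rewrite ?leq_subr // => -[].
elim: d m M => [|d IH] m M rkM PM.
  exists m, M; split=> // v _; apply: submx_full.
  by rewrite /row_full eqn_leq rank_leq_col -subn_eq0 -leqn0.
have [spans|/existsNP[v /not_implyP[Pv vM]]] := pselect (forall v, P v -> (v <= M)%MS).
  by exists m, M.
have rk_lt : (\rank M < \rank (col_mx M v))%N.
  rewrite (ltn_leqif (mxrank_leqif_sup _)) -?addsmxE ?addsmxSl //.
  by rewrite addsmx_sub submx_refl; apply/negP.
apply: (IH _ (col_mx M v)).
  by move: rkM (rank_leq_col (col_mx M v)) rk_lt; lia.
move=> k; rewrite -(splitK k); case: (split k) => k' /=; first by rewrite rowKu.
rewrite rowKd; suff -> : row k' v = v by [].
by apply/rowP => j; rewrite mxE; congr (v _ j); apply/val_inj; case: k' => -[].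
Qed.

Section Coordinates.
Variables (R : realType) (S : system).

Definition row_of_vec (v : vec R S) : 'rV[R]_#|{: idx S}| := \row_k v (enum_val k).
Definition vec_of_row (r : 'rV[R]_#|{: idx S}|) : vec R S := fun ax => r 0 (enum_rank ax).

Lemma row_of_vecK v : vec_of_row (row_of_vec v) = v.
Proof. by apply/funext => ax; rewrite /vec_of_row mxE enum_rankK. Qed.

Lemma nosig_state_coordinates : valid_system S ->
  exists m (V : 'I_m -> vec R S) (C : idx S -> 'I_m -> R), (forall k, is_state (V k)) /\
    forall w, nosig w -> forall ax, w ax = \sum_k (\sum_ax' C ax' k * w ax') * V k ax.
Proof.
move=> VS; have [m [M [M_states spans]]] :=
  exists_spanning_rows (fun r : 'rV[R]_#|{: idx S}| => is_state (vec_of_row r)).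
exists m, (fun k => vec_of_row (row k M)), (fun ax k => pinvmx M (enum_rank ax) k).
split=> // w ns ax.
have wM : (row_of_vec w <= M)%MS.
  have [c1 [c2 [s1 [s2 [st1 st2 w_eq]]]]] := nosig_span_states VS ns.
  have -> : row_of_vec w = c1 *: row_of_vec s1 + c2 *: row_of_vec s2.
    by apply/rowP => k; rewrite !mxE w_eq.
  by rewrite addmx_sub ?scalemx_sub ?spans ?row_of_vecK.
transitivity ((row_of_vec w *m pinvmx M *m M) 0 (enum_rank ax)).
  by rewrite mulmxKpV // mxE enum_rankK.
rewrite mxE; apply: eq_bigr => k _; rewrite /vec_of_row mxE [in RHS]mxE; congr (_ * _).
rewrite (reindex enum_rank) /=; last exact/onW_bij/enum_rank_bij.
by apply: eq_bigr => ax' _; rewrite mxE enum_rankK mulrC.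
Qed.

End Coordinates.

Section Tomography.
Variables (R : realType) (X Y : system).
Hypotheses (VX : valid_system X) (VY : valid_system Y).

Lemma pair_tensor_nosig_eq0 (G : vec R (compose X Y)) :
  (forall u v, is_state u -> is_state v -> pair (tensor u v) G = 0) ->
  forall u v, nosig u -> is_state v -> pair (tensor u v) G = 0.
Proof.
move=> G0 u v nu sv; have [c1 [c2 [s1 [s2 [st1 st2 u_eq]]]]] := nosig_span_states VX nu.
have -> : pair (tensor u v) G = c1 * pair (tensor s1 v) G + c2 * pair (tensor s2 v) G.
  rewrite !pair_tensor_sum !mulr_sumr -big_split; apply: eq_bigr => pX _.
  by rewrite !mulr_sumr -big_split; apply: eq_bigr => pY _; rewrite u_eq /=; ring.
by rewrite !G0 // !mulr0 addr0.
Qed.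

Lemma local_tomography (G1 G2 : vec R (compose X Y)) :
  (forall u v, is_state u -> is_state v -> pair (tensor u v) G1 = pair (tensor u v) G2) ->
  forall p, is_state p -> pair p G1 = pair p G2.
Proof.
move=> G12 p [_ [_ pNS]]; apply/eqP; rewrite -subr_eq0 -pairBr; apply/eqP.
set G := fun ax => G1 ax - G2 ax.
have G0 u v : is_state u -> is_state v -> pair (tensor u v) G = 0.
  by move=> su sv; rewrite pairBr G12 ?subrr.
have [m [V [C [V_states coord]]]] := nosig_state_coordinates R VY.
pose U k : vec R X := fun pX => \sum_pY C pY k * sliceX p pY pX.
rewrite (pair_join_decomposition G (U := U) (V := V)) => [|pX pY]; last first.
  exact (coord _ (nosig_sliceY pX pNS) pY).
apply: big1 => k _; apply: pair_tensor_nosig_eq0 => //.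
exact: nosig_lincomb (fun pY => nosig_sliceX pY pNS).
Qed.

End Tomography.

Definition input_indicator (R : realType) (S : system) (x0 : inT S) : vec R S :=
  fun ax => (ax.2 == x0)%:R.

Lemma pair_input_indicator (R : realType) (S : system) (p : vec R S) x0 :
  is_state p -> pair p (input_indicator R x0) = 1.
Proof.
move=> [_ [p1 _]]; rewrite -(p1 x0) /pair /input_indicator.
transitivity (\sum_a \sum_x p (a, x) * (x == x0)%:R); first by rewrite pair_bigA; apply: eq_bigr => -[].
apply: eq_bigr => a _; rewrite (bigD1 x0) //= eqxx mulr1 big1 ?addr0 // => x /negbTE->.
by rewrite mulr0.
Qed.

Section ProductMeasurement.
Variables (R : realType) (X Y : system) (Tr Ts : finType).
Variables (MX : Tr -> vec R X) (MY : Ts -> vec R Y).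
Hypotheses (VX : valid_system X) (VY : valid_system Y).

Lemma prod_meas_measurement :
  is_measurement MX -> is_measurement MY -> is_measurement (prod_meas MX MY).
Proof.
move=> [eX sX] [eY sY]; split=> [[r t]|p sp]; first exact: tensor_effect.
have [x0] := inT_inhabited VX; have [y0] := inT_inhabited VY.
rewrite -pair_sumr -(pair_input_indicator (joini x0 y0) sp).
apply: local_tomography => // u v su sv.
rewrite pair_sumr pair_input_indicator; last exact: tensor_state.
rewrite -(sX u su) -(pair_bigA _ (fun r t => pair (tensor u v) (prod_meas MX MY (r, t)))).
apply: eq_bigr => r _; rewrite -[RHS]mulr1 -(sY v sv) mulr_sumr.
by apply: eq_bigr => t _; rewrite pair_tensor.
Qed.

End ProductMeasurement.

Lemma separately_proportional (F : fieldType) (A B : Type) (PA : A -> Prop) (PB : B -> Prop)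
    (phi : A -> B -> F) (alpha : A -> F) (beta : B -> F) :
  (forall v, PB v -> exists c, forall u, PA u -> phi u v = c * alpha u) ->
  (forall u, PA u -> exists d, forall v, PB v -> phi u v = d * beta v) ->
  exists k, forall u v, PA u -> PB v -> phi u v = k * (alpha u * beta v).
Proof.
move=> propA propB.
have [[u0 [PAu0 alpha_u0]]|alpha0] := pselect (exists u0, PA u0 /\ alpha u0 != 0); last first.
  exists 0 => u v PAu PBv; have [c ->] := propA v PBv => //.
  have /negP/negPn/eqP-> : ~ (alpha u != 0) by move=> nz; apply: alpha0; exists u.
  by rewrite mulr0 !mul0r.
have [d phi_u0] := propB u0 PAu0.
exists (d / alpha u0) => u v PAu PBv; have [c phi_v] := propA v PBv.
have c_eq : c = d * beta v / alpha u0.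
  by apply: (mulIf alpha_u0); rewrite -phi_v // phi_u0 // mulfVK.
by rewrite phi_v // c_eq; field.
Qed.

Section Conditioning.
Variables (R : realType) (X Y : system).
Local Notation XY := (compose X Y).

Definition condr (G : vec R XY) (q : vec R Y) : vec R X :=
  fun pX => \sum_pY q pY * G (join_idx pX pY).
Definition condl (G : vec R XY) (u : vec R X) : vec R Y :=
  fun pY => \sum_pX u pX * G (join_idx pX pY).

Lemma pair_condr G u q : pair u (condr G q) = pair (tensor u q) G.
Proof.
rewrite pair_tensor_sum; apply: eq_bigr => pX _.
by rewrite /condr mulr_sumr; apply: eq_bigr => pY _; rewrite mulrA.
Qed.

Lemma pair_condl G u v : pair v (condl G u) = pair (tensor u v) G.
Proof.
rewrite pair_tensor_sum exchange_big; apply: eq_bigr => pY _.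
by rewrite /condl mulr_sumr; apply: eq_bigr => pX _; rewrite mulrA [v pY * _]mulrC.
Qed.

Variables (Tn : finType) (N : Tn -> vec R XY).

Lemma condr_measurement q : is_measurement N -> is_state q ->
  is_measurement (fun s => condr (N s) q).
Proof.
move=> [eN sN] sq; split=> [s u su|u su]; first by rewrite pair_condr; apply/eN/tensor_state.
by under eq_bigr do rewrite pair_condr; apply/sN/tensor_state.
Qed.

Lemma condl_measurement u : is_measurement N -> is_state u ->
  is_measurement (fun s => condl (N s) u).
Proof.
move=> [eN sN] su; split=> [s v sv|v sv]; first by rewrite pair_condl; apply/eN/tensor_state.
by under eq_bigr do rewrite pair_condl; apply/sN/tensor_state.
Qed.

Variables (Tr Ts : finType) (MX : Tr -> vec R X) (MY : Ts -> vec R Y) (f : Tn -> Tr * Ts).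
Hypothesis refN : refines (prod_meas MX MY) N f.

Lemma condr_refines q : is_measurement MY -> is_state q ->
  refines MX (fun s => condr (N s) q) (fun s => (f s).1).
Proof.
move=> [_ sY] sq r u su; under eq_bigr do rewrite pair_condr.
rewrite (partition_big (fun s => (f s).2) predT) //= -[LHS]mulr1 -(sY q sq) mulr_sumr.
apply: eq_bigr => t _; rewrite -pair_tensor (refN (r, t)); last exact: tensor_state.
by apply: eq_bigl => s.
Qed.

Lemma condl_refines u : is_measurement MX -> is_state u ->
  refines MY (fun s => condl (N s) u) (fun s => (f s).2).
Proof.
move=> [_ sX] su t v sv; under eq_bigr do rewrite pair_condl.
rewrite (partition_big (fun s => (f s).1) predT) //= -[LHS]mul1r -(sX u su) mulr_suml.
apply: eq_bigr => r _; rewrite -pair_tensor (refN (r, t)); last exact: tensor_state.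
by apply: eq_bigl => s; rewrite andbC.
Qed.

Lemma refinement_proportional_l s : maximally_informative MX -> is_measurement MY ->
  is_measurement N -> forall q, is_state q ->
  exists c, forall u, is_state u -> pair (tensor u q) (N s) = c * pair u (MX (f s).1).
Proof.
move=> [_ maxX] mY mN q sq.
have [c Nc] := maxX _ _ _ (condr_measurement mN sq) (condr_refines mY sq) s.
by exists c => u su; rewrite -pair_condr Nc.
Qed.

Lemma refinement_proportional_r s : is_measurement MX -> maximally_informative MY ->
  is_measurement N -> forall u, is_state u ->
  exists d, forall v, is_state v -> pair (tensor u v) (N s) = d * pair v (MY (f s).2).
Proof.
move=> mX [_ maxY] mN u su.
have [d Nd] := maxY _ _ _ (condl_measurement mN su) (condl_refines mX su) s.
by exists d => v sv; rewrite -pair_condl Nd.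
Qed.

End Conditioning.

Theorem corollary4 (R : realType) (X Y : system) (Tr Ts : finType)
    (MX : Tr -> vec R X) (MY : Ts -> vec R Y) :
  valid_system X -> valid_system Y ->
  maximally_informative MX -> maximally_informative MY ->
  maximally_informative (prod_meas MX MY).
Proof.
move=> VX VY maxX maxY; have [mX _] := maxX; have [mY _] := maxY.
split=> [|Tn N f mN refN s]; first exact: prod_meas_measurement.
have [k Nk] := separately_proportional
  (refinement_proportional_l refN s maxX mY mN) (refinement_proportional_r refN s mX maxY mN).
exists k => p sp; rewrite -pairZr; apply: local_tomography => // u v su sv.
by rewrite pairZr Nk // pair_tensor.
Qed.
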